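(* Let $t$ be the Thue-Morse word. For every $n\geq 1$, we have $PPL_t(n)=PPL^0_t(4n)\geq PPL_t(4n)$.
   Context: The Thue-Morse word $t=t[1]t[2]\cdots$ is the fixed point starting with $a$ of the morphism $\tau: a\mapsto abba,\ b\mapsto baab$. For $0\le i\le j$, $t(i..j]$ denotes the factor $t[i+1]\cdots t[j]$. A palindrome is a word $p=p[1]\cdots p[n]$ with $p[i]=p[n-i+1]$ for all $i$. $PPL_t(n)$ is the minimal number of nonempty palindromes whose concatenation equals the prefix $t(0..n]$. A decomposition $t(0..4n]=t(e_0..e_1]t(e_1..e_2]\cdots t(e_{k-1}..e_k]$ with $0=e_0<e_1<\cdots<e_k=4n$ into palindromes is called a $0$-decomposition if every $e_i$ is divisible by $4$; $PPL^0_t(4n)$ is the minimal number of palindromes in a $0$-decomposition of $t(0..4n]$. *)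

From mathcomp Require Import all_boot.
Set Implicit Arguments. Unset Strict Implicit. Unset Printing Implicit Defensive.

(* Letters: a = false, b = true. *)
Definition tau (x : bool) : seq bool :=
  if x then [:: true; false; false; true] else [:: false; true; true; false].

Definition tau_word (w : seq bool) : seq bool := flatten (map tau w).

Definition tm_prefix (k : nat) : seq bool := iter k tau_word [:: false].

(* t[i], 1-indexed (i >= 1): the i-th letter of the fixed point, read off
   tau^i(a), whose length 4^i >= i. *)
Definition t (i : nat) : bool := nth false (tm_prefix i) i.-1.

Definition factor (i j : nat) : seq bool := [seq t m | m <- iota i.+1 (j - i)].

Definition palindrome (p : seq bool) : bool := p == rev p.

(* es = [:: e_1; ...; e_k]: cut points 0 = e_0 < e_1 < ... < e_k = N with
   every t(e_{i-1}..e_i] a palindrome (nonempty by strictness). *)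
Definition pal_cuts (N : nat) (es : seq nat) : bool :=
  [&& sorted ltn (0 :: es), last 0 es == N &
      all (fun pr => palindrome (factor pr.1 pr.2)) (zip (0 :: es) es)].

Definition has_decomp (N k : nat) : Prop :=
  exists es, size es = k /\ pal_cuts N es.

(* ... a 0-decomposition (all cut points divisible by 4) into k palindromes *)
Definition has_decomp0 (N k : nat) : Prop :=
  exists es, size es = k /\ pal_cuts N es /\ all (fun e => 4 %| e) es.

Definition is_min (P : nat -> Prop) (m : nat) : Prop :=
  P m /\ forall k, P k -> m <= k.

From mathcomp Require Import all_boot zify.
From Stdlib Require Import Classical.
From Stdlib Require Wf_nat.

(* The morphism tau commutes with reversal and is injective (its images all
   have length 4 and tau a <> tau b), so it preserves and reflects
   palindromes.  Since t is a fixed point of tau, t(4a..4b] = tau(t(a..b]);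
   hence the cut sequences of 0-decompositions of t(0..4n] are exactly four
   times the cut sequences of decompositions of t(0..n], which gives
   PPL_t(n) = PPL^0_t(4n).  A 0-decomposition is in particular a
   decomposition, whence PPL_t(4n) <= PPL^0_t(4n). *)

Lemma size_tau x : size (tau x) = 4. Proof. by case: x. Qed.

Lemma tau_word_cons x w : tau_word (x :: w) = tau x ++ tau_word w.
Proof. by []. Qed.

Lemma tau_word_cat w1 w2 : tau_word (w1 ++ w2) = tau_word w1 ++ tau_word w2.
Proof. by rewrite /tau_word map_cat flatten_cat. Qed.

Lemma size_tau_word w : size (tau_word w) = 4 * size w.
Proof. by elim: w => [|x w IH] //=; rewrite size_cat size_tau IH mulnS. Qed.

Lemma rev_tau_word w : rev (tau_word w) = tau_word (rev w).
Proof.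
elim: w => [|x w IH] //.
by rewrite tau_word_cons rev_cat IH rev_cons -cats1 tau_word_cat; case: x.
Qed.

Lemma tau_word_inj : injective tau_word.
Proof.
elim=> [|x w IH] [|y w'] // => [|| /eqP];
  try by move/(congr1 size); rewrite !size_tau_word.
rewrite !tau_word_cons eqseq_cat ?size_tau // => /andP[/eqP eq_xy /eqP /IH ->].
by move: eq_xy; case: x; case: y.
Qed.

Lemma palindrome_tau_word w : palindrome (tau_word w) = palindrome w.
Proof. by rewrite /palindrome rev_tau_word (inj_eq tau_word_inj). Qed.

Lemma nth_tau_word w m j : m < size w -> j < 4 ->
  nth false (tau_word w) (4 * m + j) = nth false (tau (nth false w m)) j.
Proof.
elim: w m => [|x w IH] [|m] //= lt_m lt_j; rewrite nth_cat size_tau.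
  by rewrite add0n lt_j.
have -> : 4 * m.+1 + j - 4 = 4 * m + j by lia.
by rewrite ifF ?IH //; lia.
Qed.

Lemma tm_prefixS k : tm_prefix k.+1 = tau_word (tm_prefix k).
Proof. by rewrite /tm_prefix iterS. Qed.

Lemma size_tm_prefix k : size (tm_prefix k) = 4 ^ k.
Proof. by elim: k => [|k IH] //; rewrite tm_prefixS size_tau_word IH expnS. Qed.

Lemma prefix_tau_word w1 w2 : prefix w1 w2 -> prefix (tau_word w1) (tau_word w2).
Proof. by move=> /prefixP[s ->]; rewrite tau_word_cat prefix_prefix. Qed.

Lemma prefix_tm_prefixS k : prefix (tm_prefix k) (tm_prefix k.+1).
Proof.
elim: k => [|k IH] //.
by rewrite (tm_prefixS k) tm_prefixS; apply: prefix_tau_word.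
Qed.

Lemma prefix_tm_prefix k k' : k <= k' -> prefix (tm_prefix k) (tm_prefix k').
Proof.
move=> /subnKC <-; elim: (k' - k) => [|d IH]; first by rewrite addn0 prefix_refl.
by rewrite addnS (prefix_trans IH) ?prefix_tm_prefixS.
Qed.

Lemma nth_prefix (T : eqType) (x0 : T) s1 s2 i :
  prefix s1 s2 -> i < size s1 -> nth x0 s2 i = nth x0 s1 i.
Proof. by move=> /prefixP[s ->] lt_i; rewrite nth_cat lt_i. Qed.

Lemma t_tm_prefix k i : i < 4 ^ k -> t i.+1 = nth false (tm_prefix k) i.
Proof.
move=> lt_i; have lt_i' : i < 4 ^ i.+1 by apply/ltnW/ltn_expl.
rewrite /t -(@nth_prefix _ _ _ (tm_prefix (maxn k i.+1))) ?size_tm_prefix //.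
  by rewrite (@nth_prefix _ _ (tm_prefix k))
             ?size_tm_prefix ?prefix_tm_prefix ?leq_maxl.
by rewrite prefix_tm_prefix ?leq_maxr.
Qed.

Lemma t_mul4 m j : j < 4 -> t (4 * m + j).+1 = nth false (tau (t m.+1)) j.
Proof.
move=> lt_j; have lt_m : m < 4 ^ m.+1 by apply/ltnW/ltn_expl.
rewrite (@t_tm_prefix m.+2) ?(t_tm_prefix lt_m); last by rewrite expnS; lia.
by rewrite tm_prefixS nth_tau_word ?size_tm_prefix.
Qed.

Lemma map_t_block a : [seq t i | i <- iota (4 * a).+1 4] = tau (t a.+1).
Proof.
apply: (@eq_from_nth _ false) => [|j];
  rewrite size_map size_iota ?size_tau // => lt_j.
by rewrite (nth_map 0) ?size_iota // nth_iota // addSn t_mul4.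
Qed.

Lemma factor_mul4 a b : factor (4 * a) (4 * b) = tau_word (factor a b).
Proof.
rewrite /factor -mulnBr; move: (b - a) => L; elim: L a => [|L IH] a //.
by rewrite mulnS iotaD map_cat map_t_block addSn -mulnSr IH.
Qed.

Lemma zip_map2 (S T : Type) (f : S -> T) (s1 s2 : seq S) :
  zip (map f s1) (map f s2) = map (fun p => (f p.1, f p.2)) (zip s1 s2).
Proof. by elim: s1 s2 => [|x s1 IH] [|y s2] //=; rewrite IH. Qed.

Lemma zip_cons_rcons (T : Type) (x y : T) (s : seq T) :
  zip (x :: rcons s y) (rcons s y) = rcons (zip (x :: s) s) (last x s, y).
Proof. by elim: s x => [|z s IH] x //=; rewrite IH. Qed.

Lemma pal_cuts_mul4 N es : pal_cuts (4 * N) (map (muln 4) es) = pal_cuts N es.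
Proof.
have cons0 : 0 :: map (muln 4) es = map (muln 4) (0 :: es) by rewrite /= muln0.
rewrite /pal_cuts cons0 sorted_map -[0]/(4 * 0) last_map eqn_pmul2l //.
rewrite zip_map2 all_map.
congr [&& _, _ & _].
- by apply: eq_path => x y; rewrite /= ltn_pmul2l.
- by apply: eq_all => -[x y] /=; rewrite factor_mul4 palindrome_tau_word.
Qed.

Lemma has_decomp0_mul4 n k : has_decomp0 (4 * n) k <-> has_decomp n k.
Proof.
split=> [[es [size_es [cuts_es dvd_es]]] | [es [size_es cuts_es]]].
- have es_mul4 : es = map (muln 4) (map (divn^~ 4) es).
    rewrite -map_comp -[LHS]map_id; apply/eq_in_map => e /(allP dvd_es) /divnK.
    by rewrite mulnC.
  by exists (map (divn^~ 4) es); rewrite size_map -pal_cuts_mul4 -es_mul4.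
- exists (map (muln 4) es); rewrite size_map pal_cuts_mul4 all_map.
  do 2!split=> //; apply/allP => e _; exact: dvdn_mulr.
Qed.

Lemma has_decomp0_decomp N k : has_decomp0 N k -> has_decomp N k.
Proof. by move=> [es [size_es [cuts_es _]]]; exists es. Qed.

(* Cutting after every letter: one-letter words are palindromes. *)
Lemma has_decomp_exists N : exists k, has_decomp N k.
Proof.
elim: N => [|N [k [es [size_es /and3P[sorted_es /eqP last_es pal_es]]]]].
  by exists 0, [::].
exists k.+1, (rcons es N.+1); rewrite size_rcons size_es; split=> //.
rewrite /pal_cuts zip_cons_rcons all_rcons pal_es last_rcons eqxx /= rcons_path.
rewrite -[path _ _ _]/(sorted ltn (0 :: es)) sorted_es last_es /= ltnSn.
by rewrite /palindrome /factor subSnn /= eqxx.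
Qed.

Lemma is_min_exists {P : nat -> Prop} : (exists k, P k) -> exists m, is_min P m.
Proof.
move=> exP; have [m [[Pm minP] _]] :=
  Wf_nat.dec_inh_nat_subset_has_unique_least_element P (fun k => classic (P k)) exP.
by exists m; split=> // k /minP /leP.
Qed.

Theorem proposition7 (n : nat) (hn : 1 <= n) :
  exists k k',
    [/\ is_min (has_decomp n) k,
        is_min (has_decomp0 (4 * n)) k,
        is_min (has_decomp (4 * n)) k' &
        k' <= k].
Proof.
have [k [decomp_k min_k]] := is_min_exists (has_decomp_exists n).
have [k' [decomp_k' min_k']] := is_min_exists (has_decomp_exists (4 * n)).
exists k, k'; split=> //.
- by split=> [|j /has_decomp0_mul4]; [apply/has_decomp0_mul4 | apply: min_k].
- by apply/min_k'/has_decomp0_decomp/has_decomp0_mul4.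
Qed.
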